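(* Let $H$ be a graph and let $G$ be the graph obtained from $H$ by subdividing every edge of $H$ exactly twice (i.e., replacing each edge $xy$ of $H$ by a path $x\,a\,b\,y$ with two new internal vertices $a,b$). Let $m=|E(G)|$. Then ${\rm I}_e(G) \geq \frac{1}{3}m$.
   Context: All graphs are finite and simple. A graph is locally irregular if no two adjacent vertices have the same degree. For a graph $G$, an edge-irregulator of $G$ is a set $S\subseteq E(G)$ such that $G-S$ (the graph obtained by deleting the edges of $S$, keeping all vertices) is locally irregular. ${\rm I}_e(G)$ denotes the minimum cardinality of an edge-irregulator of $G$. *)

From mathcomp Require Import all_boot.
Set Implicit Arguments. Unset Strict Implicit. Unset Printing Implicit Defensive.

(* A finite simple graph on a finType T is given by a symmetric irreflexive
   adjacency relation adj : rel T. *)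

Section General.
Variables (T : finType) (adj : rel T).

Definition edges : {set {set T}} :=
  [set E | [exists u, exists v, adj u v && (E == [set u; v])]].

Definition deg_minus (S : {set {set T}}) (u : T) : nat :=
  #|[set v | adj u v & [set u; v] \notin S]|.

Definition locally_irregular_minus (S : {set {set T}}) : bool :=
  [forall u, forall v, (adj u v && ([set u; v] \notin S)) ==>
                       (deg_minus S u != deg_minus S v)].

Definition edge_irregulator (S : {set {set T}}) : bool :=
  (S \subset edges) && locally_irregular_minus S.

(* I_e(G): minimum cardinality of an edge-irregulator (E(G) itself is one). *)
Definition Ie : nat :=
  \big[minn/#|edges|]_(S : {set {set T}} | edge_irregulator S) #|S|.

End General.

Section Subdivision.
Variables (V : finType) (e : rel V).

(* Vertices of the graph obtained from H = (V, e) by subdividing every edge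
   twice: the original vertices (inl x), and for every edge xy of H the two
   internal vertices (x,y) (the one adjacent to x) and (y,x) (the one adjacent
   to y), so the edge xy becomes the path x - (x,y) - (y,x) - y. *)
Definition sub2_vertex : finType := (V + {p : V * V | e p.1 p.2})%type.

Definition sub2_adj : rel sub2_vertex := fun a b =>
  match a, b with
  | inl x, inr p => (val p).1 == x
  | inr p, inl x => (val p).1 == x
  | inr p, inr q => val q == ((val p).2, (val p).1)
  | inl _, inl _ => false
  end.

End Subdivision.

From mathcomp Require Import all_boot.

(* Each edge xy of H becomes a path x - a - b - y of G whose inner vertices a
   and b have degree 2 in G.  If an edge-irregulator S missed all three edges
   of this path, a and b would be adjacent in G - S with degree 2 each; so S
   meets every such path.  These paths partition E(G) into blocks of three
   edges, hence |E(G)| <= 3 |S|. *)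

Set Implicit Arguments.
Unset Strict Implicit.
Unset Printing Implicit Defensive.

Section Ie.
Variables (T : finType) (adj : rel T).

Lemma edges_irregulator : edge_irregulator adj (edges adj).
Proof.
rewrite /edge_irregulator subxx /=; apply/forallP => u; apply/forallP => v.
apply/implyP => /andP [uv]; apply: contraNT => _.
by rewrite inE; apply/existsP; exists u; apply/existsP; exists v; rewrite uv eqxx.
Qed.

Lemma Ie_attained : exists2 S, edge_irregulator adj S & #|S| = Ie adj.
Proof.
rewrite /Ie; apply: (big_ind (fun n => exists2 S, edge_irregulator adj S & #|S| = n)).
- by exists (edges adj); first exact: edges_irregulator.
- by move=> m n [S irrS <-] [R irrR <-]; rewrite /minn; case: ltnP; [exists S | exists R].
- by move=> S irrS; exists S.
Qed.

End Ie.

Section Subdivision.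
Variables (V : finType) (e : rel V) (e_sym : symmetric e).

Local Notation G := (@sub2_adj V e).
Local Notation arc := {p : V * V | e p.1 p.2}.

Definition flip (p : arc) : arc :=
  exist _ ((val p).2, (val p).1) (etrans (e_sym _ _) (valP p)).

Lemma flipK : involutive flip.
Proof. by case=> [[x y] xy]; apply: val_inj. Qed.

Definition leg (p : arc) : {set sub2_vertex e} := [set inl (val p).1; inr p].
Definition middle (p : arc) : {set sub2_vertex e} := [set inr p; inr (flip p)].

Definition sub2_path (p : arc) : {set {set sub2_vertex e}} :=
  [set leg p; middle p; leg (flip p)].

Definition sub2_paths := [set sub2_path p | p : arc].

Lemma middle_flip p : middle (flip p) = middle p.
Proof. by rewrite /middle flipK setUC. Qed.

Lemma sub2_path_flip p : sub2_path (flip p) = sub2_path p.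
Proof.
apply/setP => E; rewrite !inE flipK middle_flip.
by case: (E == leg p); case: (E == middle p); case: (E == leg (flip p)).
Qed.

Lemma card_sub2_path p : #|sub2_path p| <= 3.
Proof.
rewrite /sub2_path; apply: leq_trans (leq_card_setU _ _).1 _.
by rewrite cards1 cards2 addn1 ltnS; case: (_ != _).
Qed.

Lemma sub2_adj_inr p v : G (inr p) v = (v == inl (val p).1) || (v == inr (flip p)).
Proof.
case: v => [x|q] /=; first by rewrite orbF eq_sym; apply/eqP/eqP => [<-|[]].
apply/eqP/eqP => [qE|[->]] //; congr inr; exact: val_inj.
Qed.

Lemma deg_minus_inr (S : {set {set sub2_vertex e}}) p :
  leg p \notin S -> middle p \notin S -> deg_minus G S (inr p) = 2.
Proof.
move=> legS midS.
rewrite /deg_minus (_ : [set v | _] = [set inl (val p).1; inr (flip p)]) ?cards2 //.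
apply/setP => v; rewrite !inE sub2_adj_inr.
case: eqP => [->|_] /=; first by rewrite setUC.
by case: eqP => [->|_].
Qed.

Lemma edge_irregulator_meets_sub2_path p S :
  edge_irregulator G S -> exists2 E, E \in sub2_path p & E \in S.
Proof.
move=> /andP[_ /forallP/(_ (inr p))/forallP/(_ (inr (flip p)))/implyP irrS].
have [legS|legS] := boolP (leg p \in S); first by exists (leg p); rewrite ?inE ?eqxx.
have [midS|midS] := boolP (middle p \in S).
  by exists (middle p); rewrite ?inE ?eqxx ?orbT.
have [legS'|legS'] := boolP (leg (flip p) \in S).
  by exists (leg (flip p)); rewrite ?inE ?eqxx ?orbT.
have midS' : middle (flip p) \notin S by rewrite middle_flip.
by move: irrS; rewrite /= eqxx midS deg_minus_inr // deg_minus_inr // => /(_ isT).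
Qed.

Lemma edge_of_sub2_path_inr p (E : {set sub2_vertex e}) :
  E \in sub2_path p -> (inr p \in E) || (inr (flip p) \in E).
Proof. by rewrite !inE => /orP[/orP[]|] /eqP->; rewrite !inE ?eqxx ?orbT. Qed.

Lemma inr_edge_of_sub2_path q r (E : {set sub2_vertex e}) :
  inr r \in E -> E \in sub2_path q -> (r == q) || (r == flip q).
Proof.
move=> rE; rewrite !inE => /orP[/orP[]|] /eqP Edef; move: rE;
  rewrite Edef !inE /= ?(inj_eq inr_inj); by case: (r == q); case: (r == flip q).
Qed.

Lemma sub2_paths_trivI : trivIset sub2_paths.
Proof.
apply/trivIsetP => _ _ /imsetP[p _ ->] /imsetP[q _ ->]; apply: contraR.
case/pred0Pn => E /andP[/edge_of_sub2_path_inr pE qE]; apply/eqP.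
case/orP: pE; last rewrite -[sub2_path p]sub2_path_flip;
  by move=> /inr_edge_of_sub2_path/(_ qE)/orP[]/eqP->; rewrite ?sub2_path_flip.
Qed.

Lemma sub2_edges_subset_cover : edges G \subset cover sub2_paths.
Proof.
apply/subsetP => E; rewrite inE => /existsP[[x|p] /existsP[[y|q] /andP[/= uv /eqP->]]] //.
- by apply/bigcupP; exists (sub2_path q); [exact: imset_f | rewrite -(eqP uv) !inE eqxx].
- apply/bigcupP; exists (sub2_path p); first exact: imset_f.
  by rewrite -(eqP uv) setUC !inE eqxx.
- have -> : q = flip p by apply: val_inj; exact/eqP.
  by apply/bigcupP; exists (sub2_path p); [exact: imset_f | rewrite !inE eqxx orbT].
Qed.

(* The paths are pairwise disjoint, so pblock maps S onto all of them. *)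
Lemma card_sub2_paths_le S : edge_irregulator G S -> #|sub2_paths| <= #|S|.
Proof.
move=> irrS; apply: leq_trans (leq_imset_card (pblock sub2_paths) S).
apply/subset_leq_card/subsetP => _ /imsetP[p _ ->].
have [E pE ES] := edge_irregulator_meets_sub2_path p irrS.
by apply/imsetP; exists E; rewrite // (def_pblock sub2_paths_trivI _ pE) ?imset_f.
Qed.

Lemma card_sub2_edges_le S : edge_irregulator G S -> #|edges G| <= 3 * #|S|.
Proof.
move=> irrS; apply: leq_trans (_ : _ <= 3 * #|sub2_paths|) _; last first.
  by rewrite leq_mul2l card_sub2_paths_le ?orbT.
apply: leq_trans (subset_leq_card sub2_edges_subset_cover) _.
apply: leq_trans (leq_card_cover _).1 _; rewrite mulnC -sum_nat_const.
by apply: leq_sum => _ /imsetP[p _ ->]; exact: card_sub2_path.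
Qed.

End Subdivision.

Theorem theorem1 (V : finType) (e : rel V)
  (e_sym : symmetric e) (e_irr : irreflexive e) :
  #|edges (@sub2_adj V e)| <= 3 * Ie (@sub2_adj V e).
Proof.
have [S irrS <-] := Ie_attained (@sub2_adj V e).
exact: (card_sub2_edges_le e_sym irrS).
Qed.
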